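(* Let $S$ be a compact metric space and $h:\mathbb{R}^d\times S\to\mathbb{R}^d$ a jointly continuous map for which there is $L>0$ with $\lVert h(x_1,y)-h(x_2,y)\rVert\le L\lVert x_1-x_2\rVert$ for all $x_1,x_2\in\mathbb{R}^d$, $y\in S$. For $c\ge1$ let $h_c(x,y):=h(cx,y)/c$; let $h_\infty(x,y)$ be the set of all $u\in\mathbb{R}^d$ with $\liminf_{c\to\infty}\lVert h_c(x,y)-u\rVert=0$; and let $H(x):=\overline{co}\big(\bigcup_{y\in S}h_\infty(x,y)\big)$ (closed convex hull). Assume (S1): whenever $c_n\uparrow\infty$, $y_n\to y$ in $S$, $x\in\mathbb{R}^d$ and $\lim_{n}h_{c_n}(x,y_n)=u$, then $u\in h_\infty(x,y)$. Then $H$ is a Marchaud map.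
   Context: A set-valued map $F:\mathbb{R}^n\to\{\text{subsets of }\mathbb{R}^m\}$ is a Marchaud map if (i) $F(x)$ is convex and compact for each $x$; (ii) there is $K>0$ with $\sup_{w\in F(x)}\lVert w\rVert<K(1+\lVert x\rVert)$ for all $x$; (iii) $F$ is upper-semicontinuous, i.e. its graph $\{(x,y):y\in F(x)\}$ is closed in $\mathbb{R}^n\times\mathbb{R}^m$. *)

From HB Require Import structures.
From mathcomp Require Import all_boot all_order all_algebra.
From mathcomp Require Import all_classical all_reals all_analysis.
Set Implicit Arguments. Unset Strict Implicit. Unset Printing Implicit Defensive.
Import Order.TTheory GRing.Theory Num.Theory.
Import numFieldNormedType.Exports.
Local Open Scope classical_set_scope.
Local Open Scope ring_scope.

Definition convex_rV {R : realType} {d : nat} (A : set 'rV[R]_d) : Prop :=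
  forall x y (t : R), A x -> A y -> 0 <= t -> t <= 1 -> A (t *: x + (1 - t) *: y).

Definition closed_convex_hull {R : realType} {d : nat} (A : set 'rV[R]_d)
  : set 'rV[R]_d :=
  \bigcap_(B in [set B : set 'rV[R]_d | closed B /\ convex_rV B /\ A `<=` B]) B.

Definition hscale {R : realType} {d : nat} {S : Type}
  (h : 'rV[R]_d -> S -> 'rV[R]_d) (c : R) (x : 'rV[R]_d) (y : S) : 'rV[R]_d :=
  c^-1 *: h (c *: x) y.

(* h_oo(x,y) := { u | liminf_{c -> oo} || h_c(x,y) - u || = 0 };
   since the quantity is >= 0, liminf = 0 unfolds to: for all eps > 0 and
   every threshold M, some c >= M (with c >= 1) has || h_c(x,y) - u || < eps. *)
Definition h_infty {R : realType} {d : nat} {S : Type}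
  (h : 'rV[R]_d -> S -> 'rV[R]_d) (x : 'rV[R]_d) (y : S) : set 'rV[R]_d :=
  [set u | forall (eps M : R), 0 < eps ->
     exists c : R, 1 <= c /\ M <= c /\ `|hscale h c x y - u| < eps].

Definition Hmap {R : realType} {d : nat} {S : Type}
  (h : 'rV[R]_d -> S -> 'rV[R]_d) (x : 'rV[R]_d) : set 'rV[R]_d :=
  closed_convex_hull (\bigcup_(y in [set: S]) h_infty h x y).

Definition Marchaud {R : realType} {n m : nat} (F : 'rV[R]_n -> set 'rV[R]_m) : Prop :=
  [/\ (forall x, convex_rV (F x) /\ compact (F x)),
      (exists K : R, 0 < K /\ forall x,
          (ereal_sup [set (`|w|)%:E | w in F x] < (K * (1 + `|x|))%:E)%E) &
      closed [set p : 'rV[R]_n * 'rV[R]_m | F p.1 p.2]].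

From HB Require Import structures.
From mathcomp Require Import all_boot all_order all_algebra.
From mathcomp Require Import all_classical all_reals all_analysis.
From mathcomp Require Import lra.
Import Order.TTheory GRing.Theory Num.Theory.
Import numFieldNormedType.Exports.
Local Open Scope classical_set_scope.
Local Open Scope ring_scope.

(* Since h is L-Lipschitz in x uniformly in y, so is every h_c, and
   |h_c(x,y)| <= |h(0,y)|/c + L|x|.  Hence h_infty(x,y) lies in the closed
   ball of radius L|x|, and a cluster-point argument in compact balls shows
   that every point of h_infty(x',y) is within L|x'-x| of h_infty(x,y).
   Both facts pass to closed convex hulls: H(x) is a compact convex subset of
   the ball of radius L|x|, which gives linear growth, and H(x') lies in the
   closed L|x'-x|-thickening of H(x), which forces the graph of H to be
   closed. *)

Section normed_closure.
Context {R : realType} {V : normedModType R}.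

Lemma closure_normP (A : set V) z :
  closure A z <-> forall e, 0 < e -> exists2 v, A v & `|z - v| < e.
Proof.
split=> [clA e e0|Aapprox N /nbhs_ballP[e /= e0 zeN]].
  have [v [Av zev]] := clA _ (nbhsx_ballx z e e0).
  by exists v => //; move: zev; rewrite -ball_normE.
have [v Av zv] := Aapprox e e0; exists v; split => //.
by apply: zeN; rewrite -ball_normE.
Qed.

Lemma closed_normP (A : set V) :
  closed A <-> forall z, (forall e, 0 < e -> exists2 v, A v & `|z - v| < e) -> A z.
Proof.
split=> [clA z /closure_normP | Aapprox z /closure_normP]; first exact: clA.
exact: Aapprox.
Qed.

Lemma closed_normr_le r : closed [set v : V | `|v| <= r].
Proof.
suff -> : [set v : V | `|v| <= r] = closed_ball_ (@Num.norm _ V) 0 r.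
  exact: closed_closed_ball_.
by apply/seteqP; split => v; rewrite /closed_ball_ /= sub0r normrN.
Qed.

Definition thicken (B : set V) (r : R) : set V :=
  [set z | forall e, 0 < e -> exists2 b, B b & `|z - b| <= r + e].

Lemma thicken_closed B r : closed (thicken B r).
Proof.
apply/closed_normP => z zapprox e e0.
have e20 : 0 < e / 2 by rewrite divr_gt0.
have [v Bv zv] := zapprox _ e20; have [b Bb vb] := Bv _ e20.
by exists b => //; have := ler_distD v z b; lra.
Qed.

End normed_closure.

Section closed_graph.
Context {R : realType} {V W : normedModType R}.

Lemma closure_pair_norm (G : set (V * W)) p : closure G p ->
  forall e, 0 < e -> exists2 q, G q & `|p.1 - q.1| < e /\ `|p.2 - q.2| < e.
Proof.
move=> clG e e0; have [q [Gq [pq1 pq2]]] := clG _ (nbhsx_ballx p e e0).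
by exists q => //; move: pq1 pq2; rewrite -!ball_normE.
Qed.

Lemma closed_graph_thicken (F : V -> set W) (L : R) : 0 <= L ->
  (forall x, closed (F x)) ->
  (forall x x', F x' `<=` thicken (F x) (L * `|x' - x|)) ->
  closed [set p : V * W | F p.1 p.2].
Proof.
move=> L0 Fclosed Fthicken p clp.
have /closed_normP := Fclosed p.1; apply => eps eps0; pose eta := eps / (L + 2).
have eta0 : 0 < eta by rewrite divr_gt0 //; lra.
move: clp => /closure_pair_norm /(_ _ eta0) [q Fq [pq1 pq2]].
have [b Fb qb] := Fthicken p.1 q.1 _ Fq _ eta0.
exists b => //.
have Lq : L * `|q.1 - p.1| <= L * eta by rewrite distrC ler_wpM2l // ltW.
have epsE : eps = eta * (L + 2) by rewrite /eta mulfVK // gt_eqF //; lra.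
have := ler_distD q.2 p.2 b; lra.
Qed.

End closed_graph.

Lemma dist_convex_comb_le {R : realType} {V : normedModType R} (z1 z2 b1 b2 : V) t :
  0 <= t -> t <= 1 ->
  `|t *: z1 + (1 - t) *: z2 - (t *: b1 + (1 - t) *: b2)| <=
  t * `|z1 - b1| + (1 - t) * `|z2 - b2|.
Proof.
move=> t0 t1; rewrite opprD addrACA -!scalerBr.
by rewrite (le_trans (ler_normD _ _)) // !normrZ !ger0_norm // subr_ge0.
Qed.

Section rV_convex.
Context {R : realType} {d : nat}.
Notation V := 'rV[R]_d.

Lemma convex_normr_le r : convex_rV [set v : V | `|v| <= r].
Proof.
move=> z1 z2 t /= z1r z2r t0 t1.
have := dist_convex_comb_le z1 z2 0 0 t t0 t1.
rewrite !subr0 !scaler0 addr0 subr0.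
have : 0 <= 1 - t by rewrite subr_ge0.
nra.
Qed.

Lemma thicken_convex (B : set V) r : convex_rV B -> convex_rV (thicken B r).
Proof.
move=> convB z1 z2 t Bz1 Bz2 t0 t1 e e0.
have [b1 Bb1 zb1] := Bz1 e e0; have [b2 Bb2 zb2] := Bz2 e e0.
exists (t *: b1 + (1 - t) *: b2); first exact: convB.
apply: le_trans (dist_convex_comb_le _ _ _ _ t t0 t1) _.
have : 0 <= 1 - t by rewrite subr_ge0.
nra.
Qed.

Lemma compact_normr_le r : compact [set v : V | `|v| <= r].
Proof.
apply: bounded_closed_compact; last exact: closed_normr_le.
exists r; split; first by rewrite num_real.
by move=> M rM v /= vr; rewrite (le_trans vr) // ltW.
Qed.

Lemma cluster_normr_bounded {T : Type} (F : set_system T) {FF : ProperFilter F}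
    (g : T -> V) r :
  F [set t | `|g t| <= r] ->
  exists v, forall A e, F A -> 0 < e -> exists2 t, A t & `|v - g t| < e.
Proof.
move=> Fg; have [v [_ clv]] := compact_normr_le r (g @ F) _ Fg.
exists v => A e FA e0.
have gFA : F (g @^-1` (g @` A)) by apply: filterS FA; exact: preimage_image.
have [_ [[t At <-] vt]] := clv _ _ gFA (nbhsx_ballx v e e0).
by exists t => //; move: vt; rewrite -ball_normE.
Qed.

Lemma closed_convex_hull_closed (A : set V) : closed (closed_convex_hull A).
Proof. by apply: closed_bigI => B []. Qed.

Lemma closed_convex_hull_convex (A : set V) : convex_rV (closed_convex_hull A).
Proof.
move=> z1 z2 t Az1 Az2 t0 t1 B PB; have [_ [convB _]] := PB.
exact: convB (Az1 _ PB) (Az2 _ PB) t0 t1.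
Qed.

Lemma closed_convex_hull_min (A B : set V) :
  closed B -> convex_rV B -> A `<=` B -> closed_convex_hull A `<=` B.
Proof. by move=> clB convB AB z; apply. Qed.

End rV_convex.

Section scaled_lipschitz.
Context {R : realType} {d : nat} {S : Type} {h : 'rV[R]_d -> S -> 'rV[R]_d} {L : R}.
Hypothesis h_lipschitz : forall x1 x2 y, `|h x1 y - h x2 y| <= L * `|x1 - x2|.

Lemma hscale_lipschitz c x1 x2 y : 0 < c ->
  `|hscale h c x1 y - hscale h c x2 y| <= L * `|x1 - x2|.
Proof.
move=> c0; rewrite /hscale -scalerBr normrZ gtr0_norm ?invr_gt0 //.
have := h_lipschitz (c *: x1) (c *: x2) y; rewrite -scalerBr normrZ gtr0_norm // => lip.
apply: le_trans (ler_wpM2l _ lip) _; first by rewrite invr_ge0 ltW.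
by rewrite mulrCA mulKf ?gt_eqF.
Qed.

Lemma normr_hscale_le c x y : 0 < c ->
  `|hscale h c x y| <= c^-1 * `|h 0 y| + L * `|x|.
Proof.
move=> c0; have := hscale_lipschitz c x 0 y c0.
have -> : hscale h c 0 y = c^-1 *: h 0 y by rewrite /hscale scaler0.
have := ler_distD (c^-1 *: h 0 y) (hscale h c x y) 0.
rewrite !subr0 [`|c^-1 *: h 0 y|]normrZ gtr0_norm ?invr_gt0 //; lra.
Qed.

Lemma h_infty_normr_le x y u : h_infty h x y u -> `|u| <= L * `|x|.
Proof.
move=> hu; apply/ler_addgt0Pr => e e0; have e20 : 0 < e / 2 by rewrite divr_gt0.
have [c [c1 [Mc cu]]] := hu (e / 2) (`|h 0 y| / (e / 2)) e20.
have c0 : 0 < c by apply: lt_le_trans c1.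
have small : c^-1 * `|h 0 y| <= e / 2.
  by rewrite mulrC ler_pdivrMr // mulrC -ler_pdivrMr.
have := normr_hscale_le c x y c0; have := ler_distD (hscale h c x y) u 0.
by rewrite !subr0 distrC; lra.
Qed.

(* Along the scales c at which h_c(x',y) approaches u, the values h_c(x,y)
   stay in a compact ball; any cluster point of them is a suitable v. *)
Lemma h_infty_near x x' y u : h_infty h x' y u ->
  exists2 v, h_infty h x y v & `|u - v| <= L * `|x' - x|.
Proof.
move=> hu.
pose E (i : R * R) := [set c : R | 1 <= c /\ i.1 <= c /\ `|hscale h c x' y - u| < i.2].
pose F := filter_from [set i : R * R | 0 < i.2] E.
have FF : ProperFilter F.
  apply: filter_from_proper; last by move=> i /(hu _ i.1) [c Ec]; exists c.
  apply: filter_from_filter; first by exists (0, 1); rewrite /= ltr01.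
  move=> i j i0 j0; exists (Num.max i.1 j.1, Num.min i.2 j.2).
    by rewrite /= lt_min i0 j0.
  by move=> c [c1]; rewrite /= ge_max lt_min => -[/andP[? ?] /andP[? ?]].
have FE M e : 0 < e -> F (E (M, e)) by exists (M, e).
have Fbound : F [set c | `|hscale h c x y| <= `|h 0 y| + L * `|x|].
  apply: filterS (FE 0 1 ltr01) => c [c1 _] /=.
  have c0 : 0 < c by apply: lt_le_trans c1.
  rewrite (le_trans (normr_hscale_le c x y c0)) // lerD2r ler_piMl //.
  by rewrite invr_le1 // unitfE gt_eqF.
move: Fbound => /cluster_normr_bounded [v vP].
exists v.
  move=> eps M eps0; have [c [c1 [Mc _]] vc] := vP _ _ (FE M 1 ltr01) eps0.
  by exists c; rewrite distrC.
apply/ler_addgt0Pr => e e0; have e20 : 0 < e / 2 by rewrite divr_gt0.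
have [c [c1 [_ cu]] vc] := vP _ _ (FE 0 _ e20) e20.
have := hscale_lipschitz c x' x y (lt_le_trans ltr01 c1).
have := ler_distD (hscale h c x' y) u v.
have := ler_distD (hscale h c x y) (hscale h c x' y) v.
by rewrite /= distrC in cu; rewrite distrC in vc; lra.
Qed.

Lemma Hmap_sub_normr_le x : Hmap h x `<=` [set v | `|v| <= L * `|x|].
Proof.
apply: closed_convex_hull_min; [exact: closed_normr_le | exact: convex_normr_le |].
by move=> v [y _ yv]; exact: h_infty_normr_le yv.
Qed.

Lemma Hmap_sub_thicken x x' : Hmap h x' `<=` thicken (Hmap h x) (L * `|x' - x|).
Proof.
apply: closed_convex_hull_min.
- exact: thicken_closed.
- exact: thicken_convex (closed_convex_hull_convex _).
move=> w [y _ /(h_infty_near x) [v yv wv]] e e0.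
exists v; last by rewrite ler_wpDr // ltW.
by move=> B [_ [_ AB]]; apply: AB; exists y.
Qed.

End scaled_lipschitz.

Theorem lemma2 (R : realType) (d : nat) (S : pseudoMetricType R)
  (h : 'rV[R]_d -> S -> 'rV[R]_d) :
  hausdorff_space S ->
  compact [set: S] ->
  continuous (fun p : 'rV[R]_d * S => h p.1 p.2) ->
  (exists L : R, 0 < L /\
     forall (x1 x2 : 'rV[R]_d) (y : S), `|h x1 y - h x2 y| <= L * `|x1 - x2|) ->
  (* (S1) *)
  (forall (c : nat -> R) (yn : nat -> S) (y : S) (x u : 'rV[R]_d),
     (forall n, 1 <= c n) ->
     (forall n, c n < c n.+1) ->
     c @ \oo --> +oo ->
     yn @ \oo --> y ->
     (fun n => hscale h (c n) x (yn n)) @ \oo --> u ->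
     h_infty h x y u) ->
  Marchaud (Hmap h).
Proof.
move=> _ _ _ [L [L0 hL]] _; split.
- move=> x; split; first exact: closed_convex_hull_convex.
  apply: subclosed_compact (Hmap_sub_normr_le hL x).
    exact: closed_convex_hull_closed.
  exact: compact_normr_le.
- exists (L + 1); split => [|x]; first lra.
  apply: (@le_lt_trans _ _ (L * `|x|)%:E).
    by apply: ge_ereal_sup => _ [w /(Hmap_sub_normr_le hL) Hw <-]; rewrite lee_fin.
  by rewrite lte_fin; have := normr_ge0 x; nra.
- apply: closed_graph_thicken (ltW L0) _ (Hmap_sub_thicken hL).
  by move=> x; exact: closed_convex_hull_closed.
Qed.
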